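(* Let $r\ge 3$ and $n\ge\frac{(r-1)(2r+1)}{2}$, and let $\mathcal{H}$ be an $n$-vertex $\mathrm{T}_r$-free $r$-graph with at least one edge and with $\delta_{r-1}^{+}(\mathcal{H})>\frac{2n}{2r+1}$. Then there exist $r$ pairwise disjoint sets $V_1,\ldots,V_r\subseteq V(\mathcal{H})$, each independent in $\mathcal{H}$, such that $\min\{|V_1|,\ldots,|V_r|\}>\frac{2n}{2r+1}$.
   Context: An $r$-graph $\mathcal{H}$ is a collection of $r$-subsets (edges) of a finite vertex set $V(\mathcal{H})$. The shadow is $\partial\mathcal{H}=\{e\in\binom{V(\mathcal{H})}{r-1}\colon e\subseteq E \text{ for some } E\in\mathcal{H}\}$. For $e\in\partial\mathcal{H}$, $N_{\mathcal{H}}(e)=\{v\in V(\mathcal{H})\colon e\cup\{v\}\in\mathcal{H}\}$. The minimum positive codegree is $\delta_{r-1}^{+}(\mathcal{H})=\min\{|N_{\mathcal{H}}(e)|\colon e\in\partial\mathcal{H}\}$. A set $I\subseteq V(\mathcal{H})$ is independent in $\mathcal{H}$ if every edge contains at most one vertex of $I$. The $r$-uniform generalized triangle is $\mathrm{T}_r=\{\{1,\ldots,r-1,r\},\{1,\ldots,r-1,r+1\},\{r,r+1,\ldots,2r-1\}\}$; $\mathcal{H}$ is $\mathrm{T}_r$-free if it contains no subhypergraph isomorphic to $\mathrm{T}_r$. *)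

From mathcomp Require Import all_boot.
Set Implicit Arguments. Unset Strict Implicit. Unset Printing Implicit Defensive.

Definition uniform (T : finType) (r : nat) (H : {set {set T}}) : Prop :=
  forall E, E \in H -> #|E| = r.

Definition shadow (T : finType) (r : nat) (H : {set {set T}}) : {set {set T}} :=
  [set e : {set T} | (#|e| == r.-1) && [exists E in H, e \subset E]].

Definition nbhd (T : finType) (H : {set {set T}}) (e : {set T}) : {set T} :=
  [set v | e :|: [set v] \in H].

(* delta^+_{r-1}(H) > 2n/(2r+1), written without division *)
Definition min_pos_codeg_gt (T : finType) (r : nat) (H : {set {set T}}) : Prop :=
  forall e, e \in shadow r H -> 2 * #|T| < (2 * r + 1) * #|nbhd H e|.

Definition independent (T : finType) (H : {set {set T}}) (I : {set T}) : Prop :=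
  forall E, E \in H -> #|E :&: I| <= 1.

(* The r-uniform generalized triangle on vertex set 'I_(2r-1)
   (vertex k+1 of the paper is index k here):
   {0..r-2, r-1}, {0..r-2, r}, {r-1, r, ..., 2r-2}. *)
Definition Tr (r : nat) : {set {set 'I_(2 * r - 1)}} :=
  [set [set i : 'I_(2 * r - 1) | i < r];
       [set i : 'I_(2 * r - 1) | (i < r.-1) || (i == r :> nat)];
       [set i : 'I_(2 * r - 1) | r.-1 <= i]].

Definition Tr_free (T : finType) (r : nat) (H : {set {set T}}) : Prop :=
  ~ exists f : 'I_(2 * r - 1) -> T,
      injective f /\ forall E, E \in Tr r -> f @: E \in H.

From mathcomp Require Import all_boot zify.
Set Implicit Arguments. Unset Strict Implicit.

(* Fix an edge E and put V_i := N(E - v_i) for the vertices v_i of E; the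
   codegree bound makes each V_i large.  The heart of the matter is that for
   every (r-1)-set e the neighbourhood N(e) is independent: an edge F through
   two vertices u, w of N(e) can be moved away from e one vertex at a time
   (drop y in F /\ e, add a neighbour of F - y outside e, which exists since
   |N(F - y)| > 2n/(2r+1) >= r - 1 = |e|), and once F misses e the edges
   e + u, e + w and F form a copy of T_r.  Disjointness follows: a common
   vertex x of N(E - v_i) and N(E - v_j) gives the edge E - v_j + x, which
   meets N(E - v_i) in both v_i and x. *)

Lemma imset_nth (T : finType) (s : seq T) (m : nat) (x0 : T) (P : pred nat) :
  uniq s -> size s = m ->
  (fun i : 'I_m => nth x0 s i) @: [set i : 'I_m | P i] = [set x in s | P (index x s)].
Proof.
move=> s_uniq s_size; apply/setP => x; rewrite inE; apply/imsetP/andP => [[i] | [xs Px]].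
- rewrite inE => Pi ->; split; first by rewrite mem_nth // s_size.
  by rewrite index_uniq // s_size.
- have lt_xs : index x s < m by rewrite -s_size index_mem.
  by exists (Ordinal lt_xs); rewrite ?inE //= nth_index.
Qed.

Lemma Tr_copy_of_seq (T : finType) (r : nat) (H : {set {set T}}) (x0 : T) (L : seq T) :
  uniq L -> size L = 2 * r - 1 ->
  [set x in L | index x L < r] \in H ->
  [set x in L | (index x L < r.-1) || (index x L == r)] \in H ->
  [set x in L | r.-1 <= index x L] \in H ->
  ~ Tr_free r H.
Proof.
move=> L_uniq size_L edge1 edge2 edge3; apply; exists (fun i => nth x0 L i); split.
  by move=> i j /eqP; rewrite nth_uniq ?size_L // => /eqP /val_inj.
move=> E; rewrite !inE => /orP[/orP[]|] /eqP ->.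
- by rewrite (@imset_nth _ _ _ _ (fun n => n < r)).
- by rewrite (@imset_nth _ _ _ _ (fun n => (n < r.-1) || (n == r))).
- by rewrite (@imset_nth _ _ _ _ (fun n => r.-1 <= n)).
Qed.

Lemma Tr_of_nbhd_pair (T : finType) (r : nat) (H : {set {set T}}) (e F : {set T}) u w :
  #|e| = r.-1 -> #|F| = r -> [disjoint F & e] -> u != w -> u \in F -> w \in F ->
  u \in nbhd H e -> w \in nbhd H e -> F \in H -> ~ Tr_free r H.
Proof.
move=> card_e card_F dis_Fe uw uF wF /[!inE] eu_in ew_in F_in.
have Fe x : x \in F -> x \notin e by move=> xF; rewrite (disjointFr dis_Fe).
have wu : w != u by rewrite eq_sym.
have r_gt1 : 1 < r.
  have uwF : [set u; w] \subset F by apply/subsetP => x /set2P[]->.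
  by move: (subset_leq_card uwF); rewrite cards2 uw card_F.
(* The core e takes the positions 0 .. r-2 of T_r, u and w the positions r-1 and r. *)
set s := enum e; set t := enum (F :\ u :\ w); set L := s ++ u :: w :: t.
have size_s : size s = r.-1 by rewrite -cardE.
have size_t : size t = r - 2.
  rewrite -cardE; move: card_F.
  by rewrite (cardsD1 u) uF (cardsD1 w (F :\ u)) !inE wu wF; lia.
have mem_t x : (x \in t) = [&& x != w, x != u & x \in F] by rewrite mem_enum !inE.
have L_uniq : uniq L.
  rewrite cat_uniq !enum_uniq /= !inE !mem_t !mem_enum (negbTE (Fe _ uF)) (negbTE (Fe _ wF)).
  rewrite !eqxx (negbTE uw) enum_uniq /= andbT.
  by apply/hasPn => x; rewrite mem_t => /and3P[_ _ /Fe]; rewrite mem_enum.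
have mem_L x : (x \in L) = [|| x \in e, x == u, x == w | x \in F :\ u :\ w].
  by rewrite mem_cat !in_cons !mem_enum.
have index_L x : index x L =
    if x \in e then index x s
    else r.-1 + (if x == u then 0 else if x == w then 1 else (index x t).+2).
  by rewrite index_cat mem_enum size_s /= ![_ == x]eq_sym; case: (x == u); case: (x == w).
have index_e x : x \in e -> index x s < r.-1 by rewrite -size_s index_mem mem_enum.
have [edge1 edge2 edge3] :
  [/\ [set x in L | index x L < r] = e :|: [set u],
      [set x in L | (index x L < r.-1) || (index x L == r)] = e :|: [set w]
    & [set x in L | r.-1 <= index x L] = F].
{ split; apply/setP => x; rewrite !inE mem_L index_L.
  all: have [->|xu] := eqVneq x u; [|have [->|xw] := eqVneq x w]; [| |case: (boolP (x \in e)) => xe].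
  all: rewrite /= ?eqxx ?(negbTE uw) ?(negbTE wu) ?(negbTE xu) ?(negbTE xw) ?xe
    ?(negbTE (Fe _ uF)) ?(negbTE (Fe _ wF)) ?uF ?wF ?inE ?xu ?xw /=.
  all: try have := index_e x xe.
  all: try rewrite (negbTE (contraL (@Fe x) xe)).
  all: clear -r_gt1; lia. }
apply: (@Tr_copy_of_seq _ _ _ u L); rewrite ?edge1 ?edge2 ?edge3 //.
by rewrite size_cat /= size_s size_t; lia.
Qed.

Section CodegreeNeighbourhoods.

Variables (T : finType) (r : nat) (H : {set {set T}}).
Hypothesis H_uniform : uniform r H.

Lemma nbhd_notin (e : {set T}) v : #|e| = r.-1 -> v \in nbhd H e -> v \notin e.
Proof.
rewrite inE => card_e ev_in; apply/negP => ve.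
have := H_uniform ev_in; rewrite (setUidPl _) ?sub1set // card_e.
have : 0 < #|e| by apply/card_gt0P; exists v.
by rewrite card_e; lia.
Qed.

Lemma card_edgeD1 (F : {set T}) y : F \in H -> y \in F -> #|F :\ y| = r.-1.
Proof. by move=> F_in yF; have := H_uniform F_in; rewrite (cardsD1 y) yF => <-. Qed.

Lemma edgeD1_shadow (F : {set T}) y : F \in H -> y \in F -> F :\ y \in shadow r H.
Proof.
move=> F_in yF; rewrite inE card_edgeD1 // eqxx /=.
by apply/existsP; exists F; rewrite F_in subD1set.
Qed.

Lemma nbhd_edgeD1_disjoint (E : {set T}) a b :
  E \in H -> a \in E -> b \in E -> a != b -> independent H (nbhd H (E :\ a)) ->
  [disjoint nbhd H (E :\ a) & nbhd H (E :\ b)].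
Proof.
move=> E_in aE bE ab indep_a; rewrite -setI_eq0; apply/set0Pn => -[x /setIP[xa xb]].
have aEb : a \in E :\ b by rewrite !inE ab aE.
have ax : a != x by apply: contraNneq (nbhd_notin (card_edgeD1 E_in bE) xb) => <-.
have a_in : a \in nbhd H (E :\ a) by rewrite inE setUC setD1K.
have xb_edge : E :\ b :|: [set x] \in H by rewrite inE in xb.
have ax_sub : [set a; x] \subset (E :\ b :|: [set x]) :&: nbhd H (E :\ a).
  by apply/subsetP => y /set2P[]->; rewrite in_setI in_setU in_set1 ?eqxx ?orbT ?aEb ?a_in ?xa.
by have := leq_trans (subset_leq_card ax_sub) (indep_a _ xb_edge); rewrite cards2 ax.
Qed.

Hypothesis n_large : (r - 1) * (2 * r + 1) <= 2 * #|T|.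
Hypothesis H_codeg : min_pos_codeg_gt r H.

Lemma nbhd_card_gt (g : {set T}) : g \in shadow r H -> r.-1 < #|nbhd H g|.
Proof.
move=> /H_codeg codeg_g; have := leq_ltn_trans n_large codeg_g.
by rewrite mulnC ltn_mul2l /=; lia.
Qed.

Lemma edge_swap_outside (e F : {set T}) y :
  #|e| = r.-1 -> F \in H -> y \in F -> exists2 z, z \notin e & F :\ y :|: [set z] \in H.
Proof.
move=> card_e F_in yF.
have : ~~ (nbhd H (F :\ y) \subset e).
  by apply/negP => /subset_leq_card; rewrite card_e leqNgt nbhd_card_gt ?edgeD1_shadow.
by case/subsetPn => z; rewrite inE => zF' ze; exists z.
Qed.

Hypothesis H_Tr_free : Tr_free r H.

Lemma nbhd_independent (e : {set T}) : #|e| = r.-1 -> independent H (nbhd H e).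
Proof.
move=> card_e F F_in; rewrite leqNgt; apply/negP => /card_gt1P[u [w [/setIP[uF uN] /setIP[wF wN] uw]]].
have [ue we] := (nbhd_notin card_e uN, nbhd_notin card_e wN).
have [k] := ubnP #|F :&: e|; elim: k F F_in uF wF => // k IH F F_in uF wF lt_Fe.
have [Fe0 | [y /setIP[yF ye]]] := set_0Vmem (F :&: e).
  apply: (Tr_of_nbhd_pair card_e (H_uniform F_in) _ uw uF wF uN wN F_in H_Tr_free).
  by rewrite -setI_eq0 Fe0.
have [z ze zF'_in] := edge_swap_outside card_e F_in yF.
have uy : u != y by apply: contraNneq ue => ->.
have wy : w != y by apply: contraNneq we => ->.
apply: (IH _ zF'_in); rewrite ?inE ?uy ?uF ?wy ?wF //.
have sub : (F :\ y :|: [set z]) :&: e \subset (F :&: e) :\ y.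
  apply/subsetP => x; rewrite !inE.
  by case: (eqVneq x z) => [->|_]; rewrite ?(negbTE ze) ?andbF //= orbF => /andP[/andP[-> ->] ->].
rewrite [#|F :&: e|](cardsD1 y) !inE yF ye add1n ltnS in lt_Fe.
exact: leq_ltn_trans (subset_leq_card sub) lt_Fe.
Qed.

End CodegreeNeighbourhoods.

Theorem claim2p3 (r : nat) (T : finType) (H : {set {set T}}) :
  3 <= r ->
  (r - 1) * (2 * r + 1) <= 2 * #|T| ->
  uniform r H ->
  Tr_free r H ->
  H != set0 ->
  min_pos_codeg_gt r H ->
  exists V : 'I_r -> {set T},
    (forall i j, i != j -> [disjoint V i & V j]) /\
    (forall i, independent H (V i)) /\
    (forall i, 2 * #|T| < (2 * r + 1) * #|V i|).
Proof.
move=> _ n_large H_uniform H_Tr_free /set0Pn[E E_in] H_codeg.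
pose v (i : 'I_r) : T := enum_val (cast_ord (esym (H_uniform _ E_in)) i).
have vE i : v i \in E by apply: enum_valP.
have v_inj : injective v by move=> i j /enum_val_inj /cast_ord_inj.
have indep i : independent H (nbhd H (E :\ v i)).
  exact: (nbhd_independent H_uniform n_large H_codeg H_Tr_free) (card_edgeD1 H_uniform E_in (vE i)).
exists (fun i => nbhd H (E :\ v i)); split; [|split] => // [i j ij | i] /=.
  exact/(nbhd_edgeD1_disjoint H_uniform E_in (vE i) (vE j) (contra_neq (@v_inj i j) ij) (indep i)).
exact/H_codeg/(edgeD1_shadow H_uniform E_in).
Qed.
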